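(* Let $(X,\mathcal{M},\mu)$ and $(Y,\mathcal{N},\nu)$ be measure spaces with non-trivial measures. Let $1\le a<b\le\infty$ and $1\le c<d\le\infty$, and let $U$ be an operator (not necessarily linear) mapping measurable functions on $Y$ to measurable functions on $X$ such that there exist constants $\sigma\in(0,\infty)$ and $C\in(0,\infty)$ with $$\|U[g]\|_p\le C\,\sigma^{1/q-1/p}\,|||g|||_q\qquad\text{for all } g\in L(q,Y),\ p\in(a,b),\ q\in(c,d).$$ Let $\underline{C}$ be the minimal such constant, i.e. $$\underline{C}=\sup_{g:\ |||g|||_q\in(0,\infty)}\ \sup_{p\in(a,b),\,q\in(c,d)}\left\{\sigma^{1/p-1/q}\frac{\|U[g]\|_p}{|||g|||_q}\right\}.$$ Let $\psi\in G\Psi(a,b)$ and $\chi\in G\Psi(c,d)$ be generating functions, with associated Grand Lebesgue Spaces $G\psi$ (of functions on $X$) and $G\chi$ (of functions on $Y$). Then for every $g$, $$\frac{\|U[g]\|_{G\psi}}{\phi_{G\psi}(\sigma^{-1})}\le \underline{C}\cdot\frac{\|g\|_{G\chi}}{\phi_{G\chi}(\sigma^{-1})},$$ and the constant $\underline{C}$ in this inequality is, in the general case, the best possible.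
   Context: For $p\in[1,\infty]$, $\|f\|_p=\left(\int_X|f|^p\,d\mu\right)^{1/p}$ and $|||g|||_q=\left(\int_Y|g|^q\,d\nu\right)^{1/q}$ (usual modification for $\infty$); $L(p,X)$, $L(q,Y)$ are the corresponding Lebesgue–Riesz spaces. For $1\le a<b\le\infty$, $G\Psi(a,b)$ is the set of positive measurable functions $\psi$ on $(a,b)$ (possibly infinite at the endpoints) with $\inf_{p}\psi(p)>0$. The Grand Lebesgue Space $G\psi$ on $X$ consists of measurable $f$ with finite norm $\|f\|_{G\psi}=\sup_{p\in(a,b)}\|f\|_p/\psi(p)$; similarly $G\chi$ on $Y$ has norm $\|g\|_{G\chi}=\sup_{q\in(c,d)}|||g|||_q/\chi(q)$. The fundamental function of $G\psi$ is $\phi_{G\psi}(\delta)=\sup_{p\in(a,b)}\delta^{1/p}/\psi(p)$ for $\delta>0$, and analogously $\phi_{G\chi}(\delta)=\sup_{q\in(c,d)}\delta^{1/q}/\chi(q)$. *)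

From HB Require Import structures.
From mathcomp Require Import all_boot all_order all_algebra.
From mathcomp Require Import all_classical all_reals all_analysis.
Set Implicit Arguments. Unset Strict Implicit. Unset Printing Implicit Defensive.
Import Order.TTheory GRing.Theory Num.Theory.
Local Open Scope classical_set_scope.
Local Open Scope ring_scope.

Definition expo_dom {R : realType} (a : R) (b : \bar R) : set R :=
  [set p | a < p /\ (p%:E < b)%E].

Definition Lp {d} {T : measurableType d} {R : realType}
  (mu : {measure set T -> \bar R}) (p : R) (f : T -> R) : \bar R :=
  Lnorm mu p%:E (EFin \o f).

Definition GPsi {R : realType} (a : R) (b : \bar R) (psi : R -> R) : Prop :=
  [/\ 1 <= a, (a%:E < b)%E,
      measurable_fun (expo_dom a b) psi,
      (forall p, expo_dom a b p -> 0 < psi p) &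
      exists2 eps : R, 0 < eps & forall p, expo_dom a b p -> eps <= psi p].

Definition GLSnorm {d} {T : measurableType d} {R : realType}
  (mu : {measure set T -> \bar R}) (a : R) (b : \bar R) (psi : R -> R)
  (f : T -> R) : \bar R :=
  ereal_sup [set (Lp mu p f / (psi p)%:E)%E | p in expo_dom a b].

Definition fundfun {R : realType} (a : R) (b : \bar R) (psi : R -> R)
  (delta : R) : \bar R :=
  ereal_sup [set (delta `^ p^-1 / psi p)%:E | p in expo_dom a b].

Definition op_bound {dX dY} {X : measurableType dX} {Y : measurableType dY}
  {R : realType} (mu : {measure set X -> \bar R}) (nu : {measure set Y -> \bar R})
  (a : R) (b : \bar R) (c : R) (d : \bar R) (U : (Y -> R) -> (X -> R))
  (sigma C : R) : Prop :=
  forall (g : Y -> R) (p q : R),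
    measurable_fun setT g -> (Lp nu q g < +oo)%E ->
    expo_dom a b p -> expo_dom c d q ->
    (Lp mu p (U g) <= (C * sigma `^ (q^-1 - p^-1))%:E * Lp nu q g)%E.

Definition Cmin {dX dY} {X : measurableType dX} {Y : measurableType dY}
  {R : realType} (mu : {measure set X -> \bar R}) (nu : {measure set Y -> \bar R})
  (a : R) (b : \bar R) (c : R) (d : \bar R) (U : (Y -> R) -> (X -> R))
  (sigma : R) : \bar R :=
  ereal_sup [set z | exists (g : Y -> R) (p q : R),
 [/\ measurable_fun setT g, (0 < Lp nu q g)%E, (Lp nu q g < +oo)%E,
        expo_dom a b p /\ expo_dom c d q &
        z = ((sigma `^ (p^-1 - q^-1))%:E * (Lp mu p (U g) / Lp nu q g))%E]].

Definition GLS_setting {dX dY} {X : measurableType dX} {Y : measurableType dY}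
  {R : realType} (mu : {measure set X -> \bar R}) (nu : {measure set Y -> \bar R})
  (a : R) (b : \bar R) (c : R) (d : \bar R) (U : (Y -> R) -> (X -> R))
  (sigma : R) (psi chi : R -> R) : Prop :=
  [/\ (0 < mu setT)%E /\ (0 < nu setT)%E,
      GPsi a b psi /\ GPsi c d chi,
      (forall g : Y -> R, measurable_fun setT g -> measurable_fun setT (U g)),
      0 < sigma &
      exists2 C : R, 0 < C & op_bound mu nu a b c d U sigma C].

From HB Require Import structures.
From mathcomp Require Import all_boot all_order all_algebra.
From mathcomp Require Import all_classical all_reals all_analysis.
From mathcomp Require Import ring lra.
Import Order.TTheory GRing.Theory Num.Theory.
Local Open Scope classical_set_scope.
Local Open Scope ring_scope.

(* For p in (a,b) and q in (c,d), the definition of the minimal constant k gives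
   sigma^{1/p} ||U g||_p <= k sigma^{1/q} |||g|||_q <= k sigma^{1/q} chi(q) ||g||_{G chi}.
   Multiplying by sigma^{-1/q} / chi(q) and taking the supremum over q bounds
   sigma^{1/p} ||U g||_p by k ||g||_{G chi} / phi_{G chi}(1/sigma); multiplying in turn by
   sigma^{-1/p} / psi(p) <= phi_{G psi}(1/sigma) and taking the supremum over p gives the
   estimate. Equality holds for the identity operator on a one-point probability space
   with sigma = 1 and psi = chi = 1, where every norm involved equals |g|. *)

Section extended_real_lemmas.
Context {R : realType}.
Local Open Scope ereal_scope.

Lemma expo_dom_nonempty {a : R} {b : \bar R} : a%:E < b -> exists p, expo_dom a b p.
Proof.
case: b => [r| |] //= ab.
  rewrite lte_fin in ab.
  by exists ((a + r) / 2)%R; split; rewrite ?lte_fin; lra.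
by exists (a + 1)%R; split; rewrite ?ltry //; lra.
Qed.

Lemma powRV (s r : R) : (0 < s)%R -> ((s^-1) `^ r = (s `^ r)^-1)%R.
Proof. by move=> s0; rewrite -powR_inv1 ?ltW // -powRrM mulN1r powRN. Qed.

Lemma lee_pdivr_ereal (x y z : \bar R) : 0 < z -> 0 <= y -> x <= y * z -> x / z <= y.
Proof.
case: z => [r| |] //= r0 y0 xyz; last by rewrite invey mule0.
by rewrite lte_fin in r0; rewrite inver gt_eqF // lee_pdivrMr.
Qed.

Lemma le_div_ereal_sup {I : Type} (D : set I) (f : I -> R) (x : \bar R) (K : R) :
  0 <= x -> (exists2 i, D i & (0 < f i)%R) ->
  (forall i, D i -> x * (f i)%:E <= K%:E) ->
  x <= K%:E / ereal_sup [set (f i)%:E | i in D].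
Proof.
move=> x0 [i0 Di0 fi0] xfK; set S := ereal_sup _.
have fS : (f i0)%:E <= S by apply: ereal_sup_ubound; exists i0.
case: x x0 xfK => [r| |] // + xfK; last first.
  by have := xfK _ Di0; rewrite gt0_mulye ?lte_fin.
rewrite lee_fin le_eqVlt => /predU1P[r0 | r_gt0].
  have := xfK _ Di0; rewrite -r0 mul0e => K0.
  by rewrite mule_ge0 // inve_ge0 (le_trans _ fS) // lee_fin ltW.
have SK : S <= (K / r)%:E.
  apply: ge_ereal_sup => _ [i Di <-]; rewrite lee_fin ler_pdivlMr // mulrC.
  by rewrite -lee_fin EFinM xfK.
have S_gt0 : 0 < S by apply: lt_le_trans fS; rewrite lte_fin.
have Sfin : S \is a fin_num.
  by rewrite ge0_fin_numE ?ltW // (le_lt_trans SK) ?ltry.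
rewrite -(fineK Sfin) inver gt_eqF -?lte_fin ?fineK // -EFinM lee_fin.
rewrite ler_pdivlMr -?lte_fin ?fineK // mulrC -ler_pdivlMr //.
by rewrite -lee_fin fineK.
Qed.

End extended_real_lemmas.

Section grand_lebesgue_norm.
Context {d : measure_display} {T : measurableType d} {R : realType}.
Context {mu : {measure set T -> \bar R}} {a : R} {b : \bar R} {psi : R -> R}.
Hypothesis ab : (a%:E < b)%E.
Hypothesis psi_gt0 : forall p, expo_dom a b p -> 0 < psi p.
Local Open Scope ereal_scope.

Lemma Lp_ge0 p f : 0 <= Lp mu p f.
Proof. exact: Lnorm_ge0. Qed.

Lemma Lp_fin_num {p f} : Lp mu p f < +oo -> exists r, Lp mu p f = r%:E.
Proof. by move=> fin; exists (fine (Lp mu p f)); rewrite fineK // ge0_fin_numE ?Lp_ge0. Qed.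

Lemma Lp_le_GLSnorm p f :
  expo_dom a b p -> Lp mu p f <= (psi p)%:E * GLSnorm mu a b psi f.
Proof.
move=> pD; have psi_p_gt0 := psi_gt0 _ pD.
have : Lp mu p f / (psi p)%:E <= GLSnorm mu a b psi f.
  by apply: ereal_sup_ubound; exists p.
by rewrite inver gt_eqF // lee_pdivrMr // muleC.
Qed.

Lemma GLSnorm_ge0 f : 0 <= GLSnorm mu a b psi f.
Proof.
have [p pD] := expo_dom_nonempty ab.
have ub : Lp mu p f / (psi p)%:E <= GLSnorm mu a b psi f.
  by apply: ereal_sup_ubound; exists p.
by apply: le_trans ub; rewrite mule_ge0 ?Lp_ge0 // inve_ge0 lee_fin ltW ?psi_gt0.
Qed.

Lemma GLSnorm_le0 f :
  (forall p, expo_dom a b p -> Lp mu p f = 0) -> GLSnorm mu a b psi f <= 0.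
Proof. by move=> f0; apply: ge_ereal_sup => _ [p pD <-]; rewrite f0 // mul0e. Qed.

Lemma fundfun_gt0 delta : (0 < delta)%R -> 0 < fundfun a b psi delta.
Proof.
move=> delta_gt0; have [p pD] := expo_dom_nonempty ab.
have ub : (delta `^ p^-1 / psi p)%:E <= fundfun a b psi delta.
  by apply: ereal_sup_ubound; exists p.
by apply: lt_le_trans ub; rewrite lte_fin divr_gt0 ?powR_gt0 ?psi_gt0.
Qed.

End grand_lebesgue_norm.

Section minimal_constant.
Context {dX dY : measure_display} {X : measurableType dX} {Y : measurableType dY}.
Context {R : realType}.
Context {mu : {measure set X -> \bar R}} {nu : {measure set Y -> \bar R}}.
Context {a : R} {b : \bar R} {c : R} {d : \bar R}.
Context {U : (Y -> R) -> (X -> R)} {sigma : R}.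
Hypothesis sigma_gt0 : 0 < sigma.
Local Notation Cmin := (Cmin mu nu a b c d U sigma).
Local Open Scope ereal_scope.

Lemma Cmin_le C : op_bound mu nu a b c d U sigma C -> Cmin <= C%:E.
Proof.
move=> U_bound; apply: ge_ereal_sup => _ [g [p [q [mg g_gt0 g_fin [pD qD] ->]]]].
have := U_bound g p q mg g_fin pD qD.
have [n nE] := Lp_fin_num g_fin; rewrite nE lte_fin in g_gt0 *.
rewrite -(lee_pdivrMr _ _ g_gt0) => Ug_le; rewrite inver gt_eqF //.
apply: le_trans (lee_wpmul2l _ Ug_le) _; first by rewrite lee_fin powR_ge0.
by rewrite -EFinM lee_fin -opprB powRN mulrCA mulVf ?gt_eqF ?powR_gt0 ?mulr1.
Qed.

Lemma Cmin_ge0 {g p q} : measurable_fun setT g -> 0 < Lp nu q g -> Lp nu q g < +oo ->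
  expo_dom a b p -> expo_dom c d q -> 0 <= Cmin.
Proof.
move=> mg g_gt0 g_fin pD qD.
have ub : (sigma `^ (p^-1 - q^-1))%:E * (Lp mu p (U g) / Lp nu q g) <= Cmin.
  by apply: ereal_sup_ubound; exists g, p, q.
by apply: le_trans ub; rewrite mule_ge0 ?lee_fin ?powR_ge0 // mule_ge0 ?inve_ge0 ?Lp_ge0.
Qed.

Lemma Lp_op_le_Cmin {C g p q} : op_bound mu nu a b c d U sigma C ->
  measurable_fun setT g -> expo_dom a b p -> expo_dom c d q -> Lp nu q g < +oo ->
  Lp mu p (U g) * (sigma `^ p^-1)%:E <= Cmin * ((sigma `^ q^-1)%:E * Lp nu q g).
Proof.
move=> U_bound mg pD qD g_fin; have [n nE] := Lp_fin_num g_fin.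
have /orP[/eqP n0 | n_gt0] : ((n == 0) || (0 < n))%R.
  by rewrite -le0r -lee_fin -nE Lp_ge0.
  have := U_bound g p q mg g_fin pD qD; rewrite nE n0 mule0 => Ug_le0.
  have -> : Lp mu p (U g) = 0 by apply/le_anti; rewrite Ug_le0 Lp_ge0.
  by rewrite mul0e !mule0.
have ratio_le : (sigma `^ (p^-1 - q^-1))%:E * (Lp mu p (U g) / n%:E) <= Cmin.
  by apply: ereal_sup_ubound; exists g, p, q; split; rewrite ?nE ?lte_fin ?ltry.
have factor_ratio : Lp mu p (U g) * (sigma `^ p^-1)%:E =
    (sigma `^ (p^-1 - q^-1))%:E * (Lp mu p (U g) / n%:E) * ((sigma `^ q^-1)%:E * n%:E).
  rewrite inver gt_eqF // [_%:E * (_ * _)]muleCA -muleA -!EFinM.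
  rewrite -[in LHS](subrK q^-1%R p^-1%R) powRD ?(gt_eqF sigma_gt0) ?implybT //.
  by congr (_ * _%:E); field; rewrite gt_eqF.
by rewrite factor_ratio nE lee_wpmul2r // mule_ge0 ?lee_fin ?powR_ge0 ?ltW.
Qed.

End minimal_constant.

Section norm_estimate.
Context {dX dY : measure_display} {X : measurableType dX} {Y : measurableType dY}.
Context {R : realType}.
Context {mu : {measure set X -> \bar R}} {nu : {measure set Y -> \bar R}}.
Context {a : R} {b : \bar R} {c : R} {d : \bar R}.
Context {U : (Y -> R) -> (X -> R)} {sigma : R} {psi chi : R -> R} {C : R}.
Hypotheses (ab : (a%:E < b)%E) (cd : (c%:E < d)%E).
Hypothesis psi_gt0 : forall p, expo_dom a b p -> 0 < psi p.
Hypothesis chi_gt0 : forall q, expo_dom c d q -> 0 < chi q.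
Hypothesis sigma_gt0 : 0 < sigma.
Hypothesis U_bound : op_bound mu nu a b c d U sigma C.
Context {g : Y -> R}.
Hypotheses (mg : measurable_fun setT g) (g_fin : (GLSnorm nu c d chi g < +oo)%E).
Local Open Scope ereal_scope.

Local Notation estimate := (GLSnorm mu a b psi (U g) / fundfun a b psi sigma^-1
  <= Cmin mu nu a b c d U sigma * (GLSnorm nu c d chi g / fundfun c d chi sigma^-1)).

Let Lp_g_fin q : expo_dom c d q -> Lp nu q g < +oo.
Proof.
move=> qD; apply: le_lt_trans (Lp_le_GLSnorm chi_gt0 _ g qD) _.
by rewrite lte_mul_pinfty // lee_fin ltW ?chi_gt0.
Qed.

(* Here the minimal constant may be [-oo] (an empty supremum); the right-hand side is
   still [Cmin * 0 = 0]. *)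
Lemma GLSnorm_op_le_null : (forall q, expo_dom c d q -> Lp nu q g = 0) -> estimate.
Proof.
move=> g0; have [q0 q0D] := expo_dom_nonempty cd.
have Ug0 p : expo_dom a b p -> Lp mu p (U g) = 0.
  move=> pD; apply/le_anti; rewrite Lp_ge0 andbT.
  by have := U_bound g p q0 mg (Lp_g_fin _ q0D) pD q0D; rewrite g0 // mule0.
have -> : GLSnorm nu c d chi g = 0.
  by apply/le_anti; rewrite GLSnorm_le0 // (GLSnorm_ge0 cd chi_gt0).
rewrite mul0e mule0 mule_le0_ge0 ?GLSnorm_le0 // inve_ge0 ltW //.
by rewrite (fundfun_gt0 ab psi_gt0) ?invr_gt0.
Qed.

Lemma GLSnorm_op_le_pos {q1} : expo_dom c d q1 -> 0 < Lp nu q1 g -> estimate.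
Proof.
move=> q1D g_q1_gt0; have [p0 p0D] := expo_dom_nonempty ab.
have Cmin0 : 0 <= Cmin mu nu a b c d U sigma :=
  Cmin_ge0 mg g_q1_gt0 (Lp_g_fin _ q1D) p0D q1D.
have [k Cmin_k] : exists k, Cmin mu nu a b c d U sigma = k%:E.
  exists (fine (Cmin mu nu a b c d U sigma)); rewrite fineK // ge0_fin_numE //.
  by rewrite (le_lt_trans (Cmin_le sigma_gt0 _ U_bound)) ?ltry.
have G0 : 0 <= GLSnorm nu c d chi g := GLSnorm_ge0 cd chi_gt0 g.
have [G G_E] : exists G, GLSnorm nu c d chi g = G%:E.
  by exists (fine (GLSnorm nu c d chi g)); rewrite fineK // ge0_fin_numE.
rewrite Cmin_k lee_fin in Cmin0; rewrite G_E lee_fin in G0.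
set F := fundfun c d chi sigma^-1; set P := fundfun a b psi sigma^-1.
have Ug_sigma_le p : expo_dom a b p ->
    Lp mu p (U g) * (sigma `^ p^-1)%:E <= (k * G)%:E / F.
  move=> pD; apply: le_div_ereal_sup.
  - by rewrite mule_ge0 ?Lp_ge0 ?lee_fin ?powR_ge0.
  - by exists q1 => //; rewrite divr_gt0 ?powR_gt0 ?invr_gt0 ?chi_gt0.
  move=> q qD; have chi_q_gt0 := chi_gt0 _ qD.
  have Ug_le : Lp mu p (U g) * (sigma `^ p^-1)%:E <= (k * (sigma `^ q^-1 * (chi q * G)))%:E.
    apply: le_trans (Lp_op_le_Cmin sigma_gt0 U_bound mg pD qD (Lp_g_fin _ qD)) _.
    rewrite Cmin_k !EFinM -G_E; apply: lee_wpmul2l; first by rewrite lee_fin.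
    apply: lee_wpmul2l; first by rewrite lee_fin powR_ge0.
    exact: Lp_le_GLSnorm.
  apply: le_trans (lee_wpmul2r _ Ug_le) _; first by rewrite lee_fin divr_ge0 ?powR_ge0 ?ltW.
  rewrite -EFinM lee_fin powRV // [leLHS](_ : _ = k * G)%R //.
  by field; rewrite !gt_eqF ?powR_gt0.
have Ug_le : GLSnorm mu a b psi (U g) <= (k * G)%:E / F * P.
  apply: ge_ereal_sup => _ [p pD <-]; have psi_p_gt0 := psi_gt0 _ pD.
  have -> : Lp mu p (U g) / (psi p)%:E =
      Lp mu p (U g) * (sigma `^ p^-1)%:E * ((sigma^-1) `^ p^-1 / psi p)%:E.
    by rewrite -muleA -EFinM inver gt_eqF // powRV // mulrA mulfV ?gt_eqF ?powR_gt0 ?mul1r.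
  apply: lee_pmul; last by apply: ereal_sup_ubound; exists p.
  - by rewrite mule_ge0 ?Lp_ge0 ?lee_fin ?powR_ge0.
  - by rewrite lee_fin divr_ge0 ?powR_ge0 ?ltW.
  - exact: Ug_sigma_le.
rewrite Cmin_k G_E muleA -EFinM; apply: lee_pdivr_ereal Ug_le.
  by rewrite (fundfun_gt0 ab psi_gt0) ?invr_gt0.
by rewrite mule_ge0 ?lee_fin ?mulr_ge0 // inve_ge0 ltW // (fundfun_gt0 cd chi_gt0) ?invr_gt0.
Qed.

End norm_estimate.

Lemma GLSnorm_op_le {R : realType} (dX dY : measure_display)
    (X : measurableType dX) (Y : measurableType dY)
    (mu : {measure set X -> \bar R}) (nu : {measure set Y -> \bar R})
    (a : R) (b : \bar R) (c : R) (d : \bar R) (U : (Y -> R) -> (X -> R))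
    (sigma : R) (psi chi : R -> R) :
  GLS_setting mu nu a b c d U sigma psi chi ->
  forall g : Y -> R, measurable_fun setT g -> (GLSnorm nu c d chi g < +oo)%E ->
  (GLSnorm mu a b psi (U g) / fundfun a b psi sigma^-1
    <= Cmin mu nu a b c d U sigma * (GLSnorm nu c d chi g / fundfun c d chi sigma^-1))%E.
Proof.
move=> [_ [[_ ab _ psi_gt0 _] [_ cd _ chi_gt0 _]] _ sigma_gt0 [C _ U_bound]] g mg g_fin.
have [[q qD g_q_gt0] | g_null] := pselect (exists2 q, expo_dom c d q & (0 < Lp nu q g)%E).
  exact: (GLSnorm_op_le_pos ab cd psi_gt0 chi_gt0 sigma_gt0 U_bound mg g_fin qD g_q_gt0).
apply: (GLSnorm_op_le_null ab cd psi_gt0 chi_gt0 sigma_gt0 U_bound mg g_fin) => q qD.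
apply/le_anti; rewrite Lp_ge0 andbT leNgt; apply/negP => g_q_gt0.
by apply: g_null; exists q.
Qed.

Section sharpness.
Context {R : realType}.
Local Notation delta_tt := (\d_tt : {measure set unit -> \bar R}).
Local Open Scope ereal_scope.

Lemma expo_dom1y_gt0 {p : R} : expo_dom 1 +oo p -> (0 < p)%R.
Proof. by move=> [p_gt1 _]; apply: lt_trans p_gt1. Qed.

Lemma expo_dom1y2 : expo_dom (1 : R) +oo 2%R.
Proof. by split; [rewrite ltr1n | rewrite ltry]. Qed.

Lemma Lp_dirac {p : R} {f : unit -> R} : (0 < p)%R -> Lp delta_tt p f = `|f tt|%:E.
Proof.
move=> p_gt0; rewrite /Lp unlock /= integral_dirac //.
by rewrite diracE in_setT mul1e /= -powRrM mulfV ?gt_eqF // powRr1.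
Qed.

Lemma GLSnorm_dirac (f : unit -> R) : GLSnorm delta_tt 1 +oo (cst 1%R) f = `|f tt|%:E.
Proof.
apply/le_anti/andP; split.
  apply: ge_ereal_sup => _ [p pD <-].
  by rewrite /= (Lp_dirac (expo_dom1y_gt0 pD)) inve1 mule1.
have ub : Lp delta_tt 2 f / 1%:E <= GLSnorm delta_tt 1 +oo (cst 1%R) f.
  by apply: ereal_sup_ubound; exists 2%R => //; exact: expo_dom1y2.
by apply: le_trans ub; rewrite Lp_dirac // inve1 mule1.
Qed.

Lemma fundfun_one : fundfun (1 : R) +oo (cst 1%R) 1 = 1.
Proof.
apply/le_anti/andP; split.
  by apply: ge_ereal_sup => _ [p pD <-]; rewrite /= powR1 divr1.
have ub : (1 `^ 2^-1 / 1)%:E <= fundfun (1 : R) +oo (cst 1%R) 1.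
  by apply: ereal_sup_ubound; exists 2%R => //; exact: expo_dom1y2.
by apply: le_trans ub; rewrite powR1 divr1.
Qed.

Lemma GLS_setting_identity :
  GLS_setting delta_tt delta_tt 1 +oo 1 +oo id 1 (cst 1%R) (cst 1%R).
Proof.
have dirac_gt0 : 0 < delta_tt [set: unit] by rewrite /= /dirac indicE in_setT lte01.
have GPsi_one : GPsi (1 : R) +oo (cst 1%R) by split; rewrite ?ltry //; exists 1%R.
split => //; exists 1%R => // g p q _ _ pD qD.
by rewrite (Lp_dirac (expo_dom1y_gt0 pD)) (Lp_dirac (expo_dom1y_gt0 qD)) powR1 mul1r mul1e.
Qed.

Lemma Cmin_identity : Cmin delta_tt delta_tt 1 +oo 1 +oo id 1 = 1.
Proof.
apply/le_anti/andP; split.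
  apply: ge_ereal_sup => _ [g [p [q [_ g_gt0 _ [pD qD] ->]]]].
  rewrite (Lp_dirac (expo_dom1y_gt0 pD)) (Lp_dirac (expo_dom1y_gt0 qD)) in g_gt0 *.
  by rewrite powR1 mul1e divee ?gt_eqF.
have ub : (1 `^ (2^-1 - 2^-1))%:E * (Lp delta_tt 2 (cst 1%R) / Lp delta_tt 2 (cst 1%R))
    <= Cmin delta_tt delta_tt 1 +oo 1 +oo id 1.
  apply: ereal_sup_ubound; exists (cst 1%R), 2%R, 2%R.
  by split; rewrite ?Lp_dirac ?normr1 ?ltry //; split; exact: expo_dom1y2.
by apply: le_trans ub; rewrite Lp_dirac // normr1 powR1 divee ?mul1e.
Qed.

End sharpness.
Theorem mainTheorem1 (R : realType) :
  (forall (dX dY : measure_display) (X : measurableType dX) (Y : measurableType dY)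
     (mu : {measure set X -> \bar R}) (nu : {measure set Y -> \bar R})
     (a : R) (b : \bar R) (c : R) (d : \bar R) (U : (Y -> R) -> (X -> R))
     (sigma : R) (psi chi : R -> R),
     GLS_setting mu nu a b c d U sigma psi chi ->
     forall g : Y -> R, measurable_fun setT g -> (GLSnorm nu c d chi g < +oo)%E ->
     (GLSnorm mu a b psi (U g) / fundfun a b psi sigma^-1
       <= Cmin mu nu a b c d U sigma * (GLSnorm nu c d chi g / fundfun c d chi sigma^-1))%E)
  /\
  (exists (dX dY : measure_display) (X : measurableType dX) (Y : measurableType dY)
     (mu : {measure set X -> \bar R}) (nu : {measure set Y -> \bar R})
     (a : R) (b : \bar R) (c : R) (d : \bar R) (U : (Y -> R) -> (X -> R))
     (sigma : R) (psi chi : R -> R),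
     GLS_setting mu nu a b c d U sigma psi chi /\
     (0 < Cmin mu nu a b c d U sigma)%E /\
     exists g : Y -> R,
       [/\ measurable_fun setT g, (0 < GLSnorm nu c d chi g)%E,
           (GLSnorm nu c d chi g < +oo)%E &
           (GLSnorm mu a b psi (U g) / fundfun a b psi sigma^-1
             = Cmin mu nu a b c d U sigma * (GLSnorm nu c d chi g / fundfun c d chi sigma^-1))%E]).
Proof.
split; first exact: GLSnorm_op_le.
exists default_measure_display, default_measure_display, unit, unit,
  (\d_tt : {measure set unit -> \bar R}), (\d_tt : {measure set unit -> \bar R}),
  1%R, +oo%E, 1%R, +oo%E, id, 1%R, (cst 1%R), (cst 1%R).
split; first exact: GLS_setting_identity.
rewrite Cmin_identity lte01; split => //.
exists (cst 1%R); rewrite GLSnorm_dirac normr1 invr1 fundfun_one inve1 !mule1.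
by split; rewrite ?lte01 ?ltry.
Qed.
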